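(* Let $H$ be a graph with degree sequence $\pi(H)=(h_1,\ldots,h_k)$ and let $\pi=(d_1,\ldots,d_n)$ be a graphic sequence with $d_1\le M$ (i.e., every term is at most $M$) such that there are terms $d_{i_1},\ldots,d_{i_k}$ of $\pi$ (with distinct indices $i_1,\ldots,i_k$) satisfying $d_{i_j}\ge h_j$ for $1\le j\le k$. If $\pi$ has at least $2M^2+k$ positive terms, then there is a realization $G$ of $\pi$ containing a copy of $H$ whose vertices are the vertices of $G$ corresponding to the terms $d_{i_1},\ldots,d_{i_k}$.
   Context: A sequence of nonnegative integers is graphic if it is the degree sequence of some (finite simple) graph, called a realization; graphic sequences are written in nonincreasing order. The degree sequence of $H$ is written in nonincreasing order. *)

From mathcomp Require Import all_boot.
Set Implicit Arguments. Unset Strict Implicit. Unset Printing Implicit Defensive.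

Definition simple_graph (T : finType) (e : rel T) : Prop :=
  irreflexive e /\ symmetric e.

Definition deg (T : finType) (e : rel T) (v : T) : nat := #|[pred u | e v u]|.

Definition nonincreasing (n : nat) (d : 'I_n -> nat) : Prop :=
  forall i j : 'I_n, i <= j -> d j <= d i.

Definition realization (n : nat) (e : rel 'I_n) (d : 'I_n -> nat) : Prop :=
  simple_graph e /\ forall i, deg e i = d i.

Definition graphic (n : nat) (d : 'I_n -> nat) : Prop :=
  exists e : rel 'I_n, realization e d.

From mathcomp Require Import all_boot zify.
Set Implicit Arguments. Unset Strict Implicit. Unset Printing Implicit Defensive.

(* Start from any realization and add the missing edges of the copy of H one at
   a time by edge switches, which keep all degrees.  For a missing edge
   u = idx a, v = idx b, the bound d u >= deg_H a gives a neighbour x of u that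
   is not the image of an H-neighbour of a, and likewise a neighbour y of v.  If
   x <> y and xy is a non-edge, the 2-switch ux, vy -> uv, xy works.  Otherwise
   the 2M^2 + k positive terms provide an edge wz with w outside the copy and
   outside N[x] and z outside N[y], and the 3-switch ux, vy, wz -> uv, xw, yz
   works.  No removed edge lies in the copy, so the copy only grows. *)

Lemma card_bigcup_le (T I : finType) (P : pred I) (F : I -> {set T}) :
  #|\bigcup_(i | P i) F i| <= \sum_(i | P i) #|F i|.
Proof.
elim/big_rec2: _ => [|i m U _ h]; first by rewrite cards0.
by rewrite (leq_trans (leq_card_setU _ _).1) ?leq_add2l.
Qed.

Lemma card_pred_sum (T : finType) (P : pred T) :
  #|[pred x | P x]| = \sum_x (P x : nat).
Proof.
by rewrite -sum1_card big_mkcond /=; apply: eq_bigr => x _; rewrite inE; case: (P x).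
Qed.

Section Switching.

Variable T : finType.
Implicit Types (e : rel T) (s : seq (T * T)).

Definition sympairs s : seq (T * T) := flatten [seq [:: p; (p.2, p.1)] | p <- s].

Definition ends s : seq T := flatten [seq [:: p.1; p.2] | p <- s].

Lemma mem_sympairs s x y : ((x, y) \in sympairs s) = ((x, y) \in s) || ((y, x) \in s).
Proof.
elim: s => [|[a b] s IH] //=.
by rewrite !in_cons IH !xpair_eqE orbA orbACA [(x == b) && _]andbC.
Qed.

Lemma count_sympairs s t : count (fun p => p.1 == t) (sympairs s) = count_mem t (ends s).
Proof. by elim: s => [|p s IH] //=; rewrite IH !addnA. Qed.

Lemma sum_mem_uniq (L : seq (T * T)) t : uniq L ->
  \sum_s (((t, s) \in L) : nat) = count (fun p => p.1 == t) L.
Proof.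
elim: L => [|[a b] L IH] /=; first by rewrite big1.
case/andP=> abL uL; rewrite -IH // (bigD1 b) // [in RHS](bigD1 b) //= addnA.
rewrite in_cons xpair_eqE eqxx andbT eq_sym; congr (_ + _).
  by case: eqP => [<-|] /=; rewrite ?(negbTE abL) ?addn0.
apply: eq_bigr => s /negbTE sb; by rewrite in_cons xpair_eqE sb andbF.
Qed.

Definition switch e s s' : rel T :=
  fun x y => e x y && ((x, y) \notin sympairs s) || ((x, y) \in sympairs s').

(* Each vertex being an endpoint equally often in [s] and [s'] is what keeps
   the degrees. *)
Definition valid_switch e s s' :=
  [/\ uniq (sympairs s), uniq (sympairs s'), all (fun p => e p.1 p.2) s,
      all (fun p => ~~ e p.1 p.2 && (p.1 != p.2)) s' & perm_eq (ends s) (ends s')].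

Lemma switch_simple e s s' : simple_graph e -> all (fun p => p.1 != p.2) s' ->
  simple_graph (switch e s s').
Proof.
move=> [irr sym] /allP s'_loopless; split=> [x|x y]; rewrite /switch.
  by rewrite irr /= mem_sympairs orbb; apply/negP => /s'_loopless; rewrite eqxx.
by rewrite sym !mem_sympairs (orbC ((y, x) \in s)) (orbC ((y, x) \in s')).
Qed.

Lemma deg_switch e s s' t : simple_graph e -> valid_switch e s s' ->
  deg (switch e s s') t = deg e t.
Proof.
move=> [_ sym] [us us' /allP s_edges /allP s'_nonedges ends_perm].
have edge_sym p : p \in sympairs s -> e p.1 p.2.
  case: p => x y; rewrite mem_sympairs => /orP[/s_edges //|/s_edges /=].
  by rewrite sym.
have nonedge_sym p : p \in sympairs s' -> ~~ e p.1 p.2.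
  case: p => x y; rewrite mem_sympairs => /orP[/s'_nonedges /andP[] //|].
  by move/s'_nonedges => /andP[] /=; rewrite sym.
rewrite /deg !card_pred_sum.
apply: (@addnI (\sum_y (((t, y) \in sympairs s) : nat))).
rewrite [in RHS]sum_mem_uniq // count_sympairs (permP ends_perm) -count_sympairs.
rewrite -sum_mem_uniq // -!big_split /=; apply: eq_bigr => y _; rewrite /switch.
have := edge_sym (t, y); have := nonedge_sym (t, y).
case: ((t, y) \in sympairs s); case: ((t, y) \in sympairs s'); case: (e t y) => /=;
  by [move=> /(_ isT) | move=> _ /(_ isT) | ].
Qed.

End Switching.

Lemma realization_switch n (e : rel 'I_n) d s s' :
  realization e d -> valid_switch e s s' -> realization (switch e s s') d.
Proof.
move=> [sim degE] sw; split=> [|t]; last by rewrite deg_switch ?degE.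
apply: switch_simple => //; case: sw => _ _ _ /allP nonedges _.
by apply/allP => p /nonedges /andP[].
Qed.

Lemma neq_eqF (T : eqType) (x y : T) : x != y -> ((x == y) = false) * ((y == x) = false).
Proof. by move=> xy; split; [|rewrite eq_sym]; apply: negbTE. Qed.

Section SwitchCycles.

Variables (T : finType) (e : rel T).
Hypothesis e_simple : simple_graph e.

Lemma edge_neq x y : e x y -> x != y.
Proof. by case: e_simple => irr _; apply: contraTneq => ->; rewrite irr. Qed.

Lemma two_switch_valid u v x y :
  e u x -> e v y -> ~~ e u v -> ~~ e x y -> u != v -> x != y ->
  valid_switch e [:: (u, x); (v, y)] [:: (u, v); (x, y)].
Proof.
case: e_simple => _ sym ux vy nuv nxy neq_uv neq_xy.
have neq_uy : u != y by apply: contraNneq nuv => ->; rewrite sym.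
have neq_xv : x != v by apply: contraNneq nuv => <-.
have neqs := (neq_eqF (edge_neq ux), neq_eqF (edge_neq vy), neq_eqF neq_uv, neq_eqF neq_xy,
              neq_eqF neq_uy, neq_eqF neq_xv).
split; rewrite /= ?ux ?vy ?nuv ?nxy ?neq_uv ?neq_xy //.
1,2: by rewrite !inE !xpair_eqE !neqs ?andbF.
by rewrite /ends /= perm_cons (perm_catCA [:: x] [:: v]).
Qed.

Lemma three_switch_valid u v x y w z :
  e u x -> e v y -> e w z -> ~~ e u v -> ~~ e x w -> ~~ e y z ->
  u != v -> y != z -> w \notin [:: u; v; x; y] ->
  valid_switch e [:: (u, x); (v, y); (w, z)] [:: (u, v); (x, w); (y, z)].
Proof.
case: e_simple => _ sym ux vy wz nuv nxw nyz neq_uv neq_yz.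
rewrite !inE !negb_or => /and4P[neq_wu neq_wv neq_wx neq_wy].
have neq_uy : u != y by apply: contraNneq nuv => ->; rewrite sym.
have neq_xv : x != v by apply: contraNneq nuv => <-.
have neqs := (neq_eqF (edge_neq ux), neq_eqF (edge_neq vy), neq_eqF (edge_neq wz),
              neq_eqF neq_uv, neq_eqF neq_yz, neq_eqF neq_uy, neq_eqF neq_xv,
              neq_eqF neq_wu, neq_eqF neq_wv, neq_eqF neq_wx, neq_eqF neq_wy).
split; rewrite /= ?ux ?vy ?wz ?nuv ?nxw ?nyz ?neq_uv ?neq_yz ?[x == w]eq_sym ?neq_wx //.
1,2: by rewrite !inE !xpair_eqE !neqs ?andbF.
by rewrite /ends /= perm_cons (perm_catCA [:: x] [:: v]) !perm_cons
  (perm_catCA [:: y] [:: w]).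
Qed.

End SwitchCycles.

Lemma card_nbrs (T : finType) (e : rel T) x : #|[set y | e x y]| = deg e x.
Proof. by apply: eq_card => y; rewrite inE. Qed.

Section Embedding.

Variables (k n : nat) (eH : rel 'I_k) (idx : 'I_k -> 'I_n).
Hypotheses (eH_sym : symmetric eH) (idx_inj : injective idx).

Definition free_pair (p : 'I_n * 'I_n) := forall a b, eH a b -> (idx a, idx b) != p.

Lemma free_pair_nbr a x : x \notin idx @: [set c | eH a c] -> free_pair (idx a, x).
Proof.
move=> x_free a' b' hab; apply/eqP => -[/idx_inj a'a xb].
by case/negP: x_free; rewrite -xb imset_f // inE -a'a.
Qed.

Lemma free_pair_off_image w z : w \notin codom idx -> free_pair (w, z).
Proof.
move=> w_off a b _; apply/eqP => -[aw _].
by case/negP: w_off; rewrite -aw codom_f.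
Qed.

Lemma switch_keeps_image (e : rel 'I_n) s s' :
  (forall p, p \in s -> free_pair p) ->
  forall a b, eH a b -> e (idx a) (idx b) -> switch e s s' (idx a) (idx b).
Proof.
move=> s_free a b hab eab; rewrite /switch eab mem_sympairs /=.
have hba : eH b a by rewrite eH_sym.
by apply/orP; left; apply/norP; split; apply/negP => /s_free;
  [move/(_ _ _ hab) | move/(_ _ _ hba)]; rewrite eqxx.
Qed.

Lemma exists_free_nbr (e : rel 'I_n) (d : 'I_n -> nat) a b :
  realization e d -> deg eH a <= d (idx a) -> eH a b -> ~~ e (idx a) (idx b) ->
  exists2 x, e (idx a) x & x \notin idx @: [set c | eH a c].
Proof.
move=> [_ degE] deg_le hab nab.
set N := [set x | e (idx a) x]; set S := idx @: [set c | eH a c].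
have NS_lt : #|N :&: S| < #|S|.
  apply: proper_card; rewrite properEneq subsetIr andbT.
  apply/negP => /eqP NSE; have : idx b \in S by rewrite imset_f ?inE.
  by rewrite -NSE !inE (negbTE nab).
have S_le : #|S| <= #|N|.
  by rewrite card_nbrs degE (leq_trans (leq_imset_card _ _)) // card_nbrs.
have [x] : exists x, x \in N :\: S.
  by apply/set0Pn; rewrite -card_gt0 -(leq_add2l #|N :&: S|) cardsID addn1
     (leq_trans NS_lt).
by rewrite !inE => /andP[xS xN]; exists x.
Qed.

End Embedding.

Definition closed_nbhd (T : finType) (e : rel T) x := [set y | (y == x) || e x y].

Lemma card_closed_nbhd (T : finType) (e : rel T) x :
  #|closed_nbhd e x| <= (deg e x).+1.
Proof.
rewrite -card_nbrs.
apply: leq_trans (subset_leq_card (_ : _ \subset x |: [set y | e x y])) _.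
  by apply/subsetP => y; rewrite !inE.
by rewrite cardsU1 -add1n leq_add2r leq_b1.
Qed.

Section FarEdge.

Variables (n M : nat) (e : rel 'I_n) (d : 'I_n -> nat) (I : {set 'I_n}).
Hypotheses (e_real : realization e d) (d_le : forall i, d i <= M).

Lemma card_nbrs_off y v t : v \in I -> e y v -> t \in closed_nbhd e y ->
  #|[set s | e t s && (s \notin I) && (s != y)]| <= M.-1.
Proof.
case: e_real => -[_ sym] degE vI yv ty.
set F := [set s | _].
pose s0 := if t == y then v else y.
have ts0 : e t s0 by move: ty; rewrite /s0 inE; case: eqP => [-> | _] //=; rewrite sym.
have s0_out : s0 \notin F.
  by rewrite /s0 !inE; case: eqP => _; rewrite ?vI ?eqxx ?andbF.
suff F_lt : #|F| < M by rewrite -ltnS (ltn_predK F_lt).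
rewrite (leq_trans _ (d_le t)) // -degE -card_nbrs (cardsD1 s0 [set s | e t s]).
rewrite inE ts0 add1n ltnS.
apply: subset_leq_card; apply/subsetP => s sF.
rewrite !inE (contraNneq _ s0_out) => [|<- //].
by move: sF; rewrite inE => /andP[/andP[]].
Qed.

Lemma exists_far_edge x y u v :
  #|I| + 2 * M ^ 2 <= #|[set i | 0 < d i]| ->
  u \in I -> e x u -> v \in I -> e y v -> y \in closed_nbhd e x ->
  exists w z, [/\ w \notin I, w \notin closed_nbhd e x, e w z
                & z \notin closed_nbhd e y].
Proof.
case: e_real => -[_ sym] degE pos uI xu vI yv yNx.
set P := [set i | 0 < d i] in pos; set Nx := closed_nbhd e x; set Ny := closed_nbhd e y.
pose C := P :\: (I :|: Nx).
case: (boolP [exists w in C, exists z, e w z && (z \notin Ny)]).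
  case/exists_inP => w; rewrite in_setD in_setU negb_or => /andP[/andP[wI wNx] _].
  by case/existsP => z /andP[wz zNy]; exists w, z.
move/exists_inPn => none; exfalso.
(* Every w in C now lies in F t for some t in N[y]; as t also sees v or y,
   #|F t| <= M - 1, so #|P| <= (M + 1)(M - 1) + #|I| + M < #|I| + 2 M^2. *)
pose F t := [set s | e t s && (s \notin I) && (s != y)].
have C_sub : C \subset \bigcup_(t in Ny) F t.
  apply/subsetP => w wC; move: (none w wC) (wC); rewrite negb_exists.
  rewrite !inE negb_or -degE -card_nbrs => /forallP nbrs_in /andP[/andP[wI wNx]].
  case/card_gt0P => z; rewrite inE => wz; apply/bigcupP; exists z.
    by move: (nbrs_in z); rewrite wz negbK.
  by rewrite !inE sym wz wI; apply: contraNneq wNx => ->; move: yNx; rewrite inE.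
have deg_le t : deg e t <= M by rewrite degE.
have cnbhd_le t : #|closed_nbhd e t| <= M.+1.
  by apply: leq_trans (card_closed_nbhd e t) _; rewrite ltnS.
have M_gt0 : 0 < M.
  by rewrite (leq_trans _ (deg_le x)) // -card_nbrs; apply/card_gt0P; exists u; rewrite inE.
have C_le : #|C| <= M.+1 * M.-1.
  rewrite (leq_trans (subset_leq_card C_sub)) // (leq_trans (card_bigcup_le _ _)) //.
  apply: (@leq_trans (\sum_(t in Ny) M.-1)).
    by apply: leq_sum => t tNy; exact: card_nbrs_off vI yv tNy.
  by rewrite sum_nat_const leq_mul2r cnbhd_le orbT.
have Nx_le : #|Nx| <= M.+1 := cnbhd_le x.
have INx_shared : 0 < #|I :&: Nx|.
  by apply/card_gt0P; exists u; rewrite !inE uI xu orbT.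
have P_le : #|P| <= #|C| + #|I :|: Nx|.
  by rewrite -(cardsID (I :|: Nx) P) addnC leq_add2l subset_leq_card ?subsetIr.
have key : M.+1 * M.-1 + M < 2 * M ^ 2.
  by move: M_gt0; clear; case: M => // m _; rewrite -mulnn /=; nia.
have := leq_trans pos P_le; rewrite cardsU.
move: #|I| #|Nx| #|I :&: Nx| #|C| Nx_le INx_shared C_le => i nx s c; lia.
Qed.

End FarEdge.

Section Step.

Variables (k n M : nat) (eH : rel 'I_k) (d : 'I_n -> nat) (idx : 'I_k -> 'I_n).
Hypotheses (eH_simple : simple_graph eH) (d_le : forall i, d i <= M)
  (idx_inj : injective idx) (deg_le : forall j, deg eH j <= d (idx j))
  (many_pos : 2 * M ^ 2 + k <= #|[set i | 0 < d i]|).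

Definition improvement e a b (e' : rel 'I_n) :=
  [/\ realization e' d, e' (idx a) (idx b)
     & forall a' b', eH a' b' -> e (idx a') (idx b') -> e' (idx a') (idx b')].

Lemma switch_improvement e a b s s' :
  realization e d -> valid_switch e s s' -> (idx a, idx b) \in s' ->
  (forall p, p \in s -> free_pair eH idx p) -> improvement e a b (switch e s s').
Proof.
move=> re sw ab_in s_free; split.
- exact: realization_switch.
- by rewrite /switch !mem_sympairs ab_in !orbT.
- exact: (switch_keeps_image eH_simple.2 s' s_free).
Qed.

Lemma add_missing_edge e a b :
  realization e d -> eH a b -> ~~ e (idx a) (idx b) -> exists e', improvement e a b e'.
Proof.
case: (eH_simple) => irrH symH re hab nab.
have [e_simple _] := re; have sym := e_simple.2.
have [x ux x_free] := exists_free_nbr re (deg_le a) hab nab.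
have hba : eH b a by rewrite symH.
have nba : ~~ e (idx b) (idx a) by rewrite sym.
have [y vy y_free] := exists_free_nbr re (deg_le b) hba nba.
have neq_ab : idx a != idx b by rewrite inj_eq //; apply: contraTneq hab => ->; rewrite irrH.
have free_ux := free_pair_nbr idx_inj x_free.
have free_vy := free_pair_nbr idx_inj y_free.
case: (boolP (y \in closed_nbhd e x)) => [yNx | ].
  pose I := [set i in codom idx].
  have I_le : #|I| + 2 * M ^ 2 <= #|[set i | 0 < d i]|.
    by rewrite cardsE card_codom // card_ord addnC.
  have idxI j : idx j \in I by rewrite inE codom_f.
  have xu : e x (idx a) by rewrite sym.
  have yv : e y (idx b) by rewrite sym.
  have [w [z [wI wNx wz zNy]]] := exists_far_edge re d_le I_le (idxI a) xu (idxI b) yv yNx.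
  have [neq_wx nxw] : w != x /\ ~~ e x w by move: wNx; rewrite inE negb_or => /andP.
  have [neq_zy nyz] : z != y /\ ~~ e y z by move: zNy; rewrite inE negb_or => /andP.
  have w_new : w \notin [:: idx a; idx b; x; y].
    apply/negP; rewrite !inE => /or4P[] /eqP wE;
      by move: wNx wI; rewrite wE ?yNx ?idxI // inE eqxx.
  exists (switch e [:: (idx a, x); (idx b, y); (w, z)]
                   [:: (idx a, idx b); (x, w); (y, z)]).
  apply: switch_improvement => //.
  - by apply: (three_switch_valid e_simple) => //; rewrite eq_sym.
  - by rewrite inE eqxx.
  move=> p; rewrite !inE => /or3P[] /eqP -> //.
  by apply: free_pair_off_image; move: wI; rewrite inE.
rewrite inE negb_or => /andP[neq_yx nxy].
exists (switch e [:: (idx a, x); (idx b, y)] [:: (idx a, idx b); (x, y)]).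
apply: switch_improvement => //.
- by apply: (two_switch_valid e_simple) => //; rewrite eq_sym.
- by rewrite inE eqxx.
by move=> p; rewrite !inE => /orP[] /eqP ->.
Qed.

Definition missing (e : rel 'I_n) :=
  [set p : 'I_k * 'I_k | eH p.1 p.2 && ~~ e (idx p.1) (idx p.2)].

Lemma realization_embedding e : realization e d ->
  exists eG, realization eG d /\ forall a b, eH a b -> eG (idx a) (idx b).
Proof.
elim: {e}_.+1 {-2}e (ltnSn #|missing e|) => // m IH e; rewrite ltnS => le_m re.
have [miss0 | [[a b]]] := set_0Vmem (missing e).
  exists e; split=> // a b hab.
  have : (a, b) \notin missing e by rewrite miss0 inE.
  by rewrite inE /= hab negbK.
rewrite inE /= => /andP[hab nab].
have [e' [re' e'ab keep]] := add_missing_edge re hab nab.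
apply: (IH e' _ re'); apply: leq_trans le_m; apply: proper_card; apply/properP; split.
  apply/subsetP => -[a' b']; rewrite !inE /= => /andP[h'].
  by rewrite h' /=; apply: contra; apply: keep.
by exists (a, b); rewrite !inE /= ?hab ?nab ?e'ab.
Qed.

End Step.

Theorem lemma2p3 (k n M : nat) (eH : rel 'I_k) (d : 'I_n -> nat)
    (idx : 'I_k -> 'I_n) :
  simple_graph eH ->
  nonincreasing (deg eH) ->
  graphic d ->
  nonincreasing d ->
  (forall i, d i <= M) ->
  injective idx ->
  (forall j, deg eH j <= d (idx j)) ->
  2 * M ^ 2 + k <= #|[set i | 0 < d i]| ->
  exists eG : rel 'I_n,
    realization eG d /\ (forall a b : 'I_k, eH a b -> eG (idx a) (idx b)).
Proof.
move=> eH_simple _ [e re] _ d_le idx_inj deg_le many_pos.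
exact: (realization_embedding eH_simple d_le idx_inj deg_le many_pos re).
Qed.
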